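(* Let $G$ be a locally nilpotent group and $A$ a normal abelian subgroup of $G$ with $G/A$ finite. Suppose that $G$ has a proper contranormal subgroup $C$. Then there exist a subgroup $B\le A$ which is normal in $G$ and a finitely generated subgroup $K$ with $G=AK$ such that $C=BK$ and $A=B[K,A]$. In particular, the factor group $G/B$ has the finite contranormal subgroup $KB/B$.
   Context: A subgroup $H$ of a group $G$ is called contranormal in $G$ if $H^G = G$, where $H^G$ denotes the normal closure of $H$ in $G$ (the smallest normal subgroup of $G$ containing $H$). *)

From Stdlib Require Import List.
Import ListNotations.

Record Group := {
  carrier :> Type;
  gmul : carrier -> carrier -> carrier;
  gone : carrier;
  ginv : carrier -> carrier;
  gmulA : forall x y z, gmul x (gmul y z) = gmul (gmul x y) z;
  gmul1 : forall x, gmul gone x = x;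
  gmulV : forall x, gmul (ginv x) x = gone
}.

Section Defs.
Variable G : Group.

Definition subset (X Y : G -> Prop) : Prop := forall x, X x -> Y x.
Definition seteq (X Y : G -> Prop) : Prop := forall x, X x <-> Y x.

Definition is_subgroup (H : G -> Prop) : Prop :=
  H (gone G) /\ (forall x y, H x -> H y -> H (gmul G x y)) /\
  (forall x, H x -> H (ginv G x)).

Definition conj (x g : G) : G := gmul G (ginv G g) (gmul G x g).

Definition comm (x y : G) : G :=
  gmul G (ginv G x) (gmul G (ginv G y) (gmul G x y)).

Definition is_normal (N : G -> Prop) : Prop :=
  is_subgroup N /\ forall x g, N x -> N (conj x g).

Definition gen (S : G -> Prop) : G -> Prop :=
  fun x => forall H, is_subgroup H -> subset S H -> H x.

Definition normal_closure (H : G -> Prop) : G -> Prop :=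
  fun x => forall N, is_normal N -> subset H N -> N x.

Definition contranormal (H : G -> Prop) : Prop :=
  is_subgroup H /\ forall x, normal_closure H x.

Definition proper (H : G -> Prop) : Prop := exists x, ~ H x.

Definition comm_subgroup (X Y : G -> Prop) : G -> Prop :=
  gen (fun z => exists x y, X x /\ Y y /\ z = comm x y).

Fixpoint lcs (H : G -> Prop) (n : nat) : G -> Prop :=
  match n with
  | 0 => H
  | S m => comm_subgroup (lcs H m) H
  end.

Definition nilpotent (H : G -> Prop) : Prop :=
  exists n, forall x, lcs H n x -> x = gone G.

Definition finitely_generated (K : G -> Prop) : Prop :=
  exists s : list G, seteq K (gen (fun x => In x s)).

Definition locally_nilpotent : Prop :=
  forall s : list G, nilpotent (gen (fun x => In x s)).

Definition abelian (A : G -> Prop) : Prop :=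
  forall x y, A x -> A y -> gmul G x y = gmul G y x.

Definition setmul (X Y : G -> Prop) : G -> Prop :=
  fun z => exists x y, X x /\ Y y /\ z = gmul G x y.

(* X is covered by finitely many (left) cosets rN of N, i.e. XN/N is finite
   (for X a subgroup containing N: the index |X : N| is finite) *)
Definition finitely_many_cosets (X N : G -> Prop) : Prop :=
  exists s : list G, forall x, X x -> exists r, In r s /\ N (gmul G (ginv G r) x).

Definition finite_index (A : G -> Prop) : Prop :=
  finitely_many_cosets (fun _ => True) A.

End Defs.

From Stdlib Require Import List Lia.

(* A contranormal subgroup C lies in no proper subnormal subgroup. Since G/A is
   finite and G is locally nilpotent, G = F A for a nilpotent F, which makes
   every subgroup containing A subnormal; hence G = A C, and coset
   representatives of A can be chosen in C. Let K be generated by them and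
   B := C ∩ A. Then C = B K by Dedekind's law. As A is abelian, B[K,A] is
   normal, and so is B[K,A] K, which contains C and therefore is G; reading
   off the A-part gives A = B[K,A]. *)

Set Implicit Arguments.

Lemma list_choice (T U : Type) (P : U -> Prop) (Q : T -> U -> Prop) (s : list T) :
  (forall x, In x s -> exists y, P y /\ Q x y) ->
  exists t, (forall y, In y t -> P y) /\ forall x, In x s -> exists y, In y t /\ Q x y.
Proof.
  induction s as [|x s IH]; intros Hs.
  - exists nil. split; intros ? [].
  - destruct (Hs x (or_introl eq_refl)) as [y [Py Qxy]].
    destruct IH as [t [Pt Qt]]; [intros x' hx'; apply Hs; right; exact hx'|].
    exists (y :: t). split.
    + intros y' [<-|hy']; auto.
    + intros x' [<-|hx'].
      * exists y. split; [left|]; auto.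
      * destruct (Qt x' hx') as [y' [hy' Qy']]. exists y'. split; [right|]; auto.
Qed.

Section GroupTheory.

Variable G : Group.

Local Infix "·" := (gmul G) (at level 40, left associativity).
Local Notation "x ⁻¹" := (ginv G x) (at level 3, left associativity, format "x ⁻¹").
Local Notation "1" := (gone G).

Lemma mulKg (x y : G) : x⁻¹ · (x · y) = y.
Proof. rewrite gmulA, gmulV, gmul1. reflexivity. Qed.

Lemma mulgV (x : G) : x · x⁻¹ = 1.
Proof.
  rewrite <- (gmul1 G (x · x⁻¹)).
  rewrite <- (gmulV G x⁻¹) at 1.
  rewrite <- gmulA, (mulKg x). apply gmulV.
Qed.

Lemma mulg1 (x : G) : x · 1 = x.
Proof. rewrite <- (gmulV G x), gmulA, mulgV, gmul1. reflexivity. Qed.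

Lemma mulKVg (x y : G) : x · (x⁻¹ · y) = y.
Proof. rewrite gmulA, mulgV, gmul1. reflexivity. Qed.

Lemma invg_eq_of_mul1 (x y : G) : x · y = 1 -> x⁻¹ = y.
Proof. intros Hxy. rewrite <- (mulKg x y), Hxy, mulg1. reflexivity. Qed.

Lemma invgK (x : G) : x⁻¹⁻¹ = x.
Proof. apply invg_eq_of_mul1, gmulV. Qed.

Lemma invMg (x y : G) : (x · y)⁻¹ = y⁻¹ · x⁻¹.
Proof. apply invg_eq_of_mul1. rewrite <- gmulA, mulKVg, mulgV. reflexivity. Qed.

Lemma invg1 : 1⁻¹ = 1.
Proof. apply invg_eq_of_mul1, gmul1. Qed.

Hint Rewrite <- gmulA : group.
Hint Rewrite gmul1 mulg1 gmulV mulgV mulKg mulKVg invgK invMg invg1 : group.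

Ltac group_eq := unfold conj, comm; autorewrite with group; reflexivity.

Lemma conjMg (x y g : G) : conj G (x · y) g = conj G x g · conj G y g.
Proof. group_eq. Qed.

Lemma abelian_conj (A : G -> Prop) (x a : G) :
  abelian G A -> A x -> A a -> conj G x a = x.
Proof. intros Aab hx ha. unfold conj. rewrite (Aab x a hx ha). group_eq. Qed.

Section Subgroups.

Variable H : G -> Prop.
Hypothesis H_subgroup : is_subgroup G H.

Lemma subgroup1 : H 1.
Proof. apply H_subgroup. Qed.

Lemma subgroupM (x y : G) : H x -> H y -> H (x · y).
Proof. apply H_subgroup. Qed.

Lemma subgroupV (x : G) : H x -> H x⁻¹.
Proof. apply H_subgroup. Qed.

Lemma subgroup_conj (x g : G) : H x -> H g -> H (conj G x g).
Proof. intros hx hg. apply subgroupM; [apply subgroupV|apply subgroupM]; assumption. Qed.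

End Subgroups.

Lemma gen_subgroup (S : G -> Prop) : is_subgroup G (gen G S).
Proof.
  split; [|split].
  - intros H HS _. exact (subgroup1 HS).
  - intros x y hx hy H HS HSH. apply (subgroupM HS); [apply hx|apply hy]; auto.
  - intros x hx H HS HSH. apply (subgroupV HS), hx; auto.
Qed.

Lemma subset_gen (S : G -> Prop) : subset G S (gen G S).
Proof. intros x hx H _ HSH. auto. Qed.

Lemma gen_subG (S H : G -> Prop) : is_subgroup G H -> subset G S H -> subset G (gen G S) H.
Proof. intros HS HSH x hx. apply hx; assumption. Qed.

Lemma lcs_subgroup (F : G -> Prop) (m : nat) :
  is_subgroup G F -> is_subgroup G (lcs G F m).
Proof. destruct m; [auto|intros _; apply gen_subgroup]. Qed.

Definition meet (X Y : G -> Prop) : G -> Prop := fun x => X x /\ Y x.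

Lemma meet_subgroup (X Y : G -> Prop) :
  is_subgroup G X -> is_subgroup G Y -> is_subgroup G (meet X Y).
Proof.
  intros XS YS. split; [|split].
  - split; apply subgroup1; assumption.
  - intros x y [] []. split; apply subgroupM; assumption.
  - intros x []. split; apply subgroupV; assumption.
Qed.

Lemma subset_setmull (X Y : G -> Prop) : Y 1 -> subset G X (setmul G X Y).
Proof. intros Y1 x hx. exists x, 1. rewrite mulg1. auto. Qed.

Lemma subset_setmulr (X Y : G -> Prop) : X 1 -> subset G Y (setmul G X Y).
Proof. intros X1 y hy. exists 1, y. rewrite gmul1. auto. Qed.

Lemma setmul_normal_subgroup (N H : G -> Prop) :
  is_normal G N -> is_subgroup G H -> is_subgroup G (setmul G N H).
Proof.
  intros [NS Nconj] HS. split; [|split].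
  - apply subset_setmull; apply subgroup1; assumption.
  - intros x y [n [h [hn [hh ->]]]] [n' [h' [hn' [hh' ->]]]].
    exists (n · conj G n' h⁻¹), (h · h').
    split; [apply subgroupM; auto|split; [apply subgroupM; auto|group_eq]].
  - intros x [n [h [hn [hh ->]]]].
    exists (conj G n⁻¹ h), h⁻¹.
    split; [apply Nconj, subgroupV; auto|split; [apply subgroupV; auto|group_eq]].
Qed.

Lemma setmul_normalC (N H : G -> Prop) :
  is_normal G N -> seteq G (setmul G H N) (setmul G N H).
Proof.
  intros [_ Nconj] x. split.
  - intros [h [n [hh [hn ->]]]]. exists (conj G n h⁻¹), h.
    split; [apply Nconj; auto|split; [auto|group_eq]].
  - intros [n [h [hn [hh ->]]]]. exists h, (conj G n h).
    split; [auto|split; [apply Nconj; auto|group_eq]].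
Qed.

Lemma group_modr (X Y Z : G -> Prop) (x : G) :
  is_subgroup G X -> subset G Z X -> X x -> setmul G Y Z x -> setmul G (meet X Y) Z x.
Proof.
  intros XS ZX hx [y [z [hy [hz ->]]]]. exists y, z. repeat split; auto.
  replace y with (y · z · z⁻¹) by group_eq.
  apply subgroupM, subgroupV; auto.
Qed.

Lemma contranormal_seteq (X Y : G -> Prop) :
  seteq G X Y -> contranormal G X -> contranormal G Y.
Proof.
  intros XY [[X1 [XM XV]] Xcl]. split; [split; [|split]|].
  - apply XY, X1.
  - intros x y hx hy. apply XY, XM; apply XY; assumption.
  - intros x hx. apply XY, XV, XY, hx.
  - intros x N NN YN. apply (Xcl x N NN). intros y hy. apply YN, XY, hy.
Qed.

(** * Subnormality of the subgroups containing A *)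

Definition normalizer (X : G -> Prop) : G -> Prop :=
  fun g => forall x, X x -> X (conj G x g) /\ X (conj G x g⁻¹).

Fixpoint normalizer_iter (H : G -> Prop) (k : nat) : G -> Prop :=
  match k with
  | 0 => H
  | S k => normalizer (normalizer_iter H k)
  end.

Lemma normalizer_subgroup (X : G -> Prop) : is_subgroup G X -> is_subgroup G (normalizer X).
Proof.
  intros XS. split; [|split].
  - intros x hx. rewrite invg1. replace (conj G x 1) with x by group_eq. auto.
  - intros g h Ng Nh x hx. split.
    + replace (conj G x (g · h)) with (conj G (conj G x g) h) by group_eq.
      apply Nh, Ng, hx.
    + replace (conj G x (g · h)⁻¹) with (conj G (conj G x h⁻¹) g⁻¹) by group_eq.
      apply Ng, Nh, hx.
  - intros g Ng x hx. rewrite invgK. split; apply Ng, hx.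
Qed.

Lemma subset_normalizer (X : G -> Prop) : is_subgroup G X -> subset G X (normalizer X).
Proof. intros XS g hg x hx. split; apply subgroup_conj; auto. apply subgroupV; auto. Qed.

Lemma normal_of_normalizer_full (X : G -> Prop) :
  is_subgroup G X -> (forall g, normalizer X g) -> is_normal G X.
Proof. intros XS NX. split; [exact XS|]. intros x g hx. apply NX, hx. Qed.

Lemma normalizer_iter_subgroup (H : G -> Prop) (k : nat) :
  is_subgroup G H -> is_subgroup G (normalizer_iter H k).
Proof. intros HS. induction k; simpl; auto using normalizer_subgroup. Qed.

Lemma subset_normalizer_iter (H : G -> Prop) (k : nat) :
  is_subgroup G H -> subset G H (normalizer_iter H k).
Proof.
  intros HS. induction k as [|k IH]; simpl; intros x hx; auto.
  apply subset_normalizer, IH, hx. apply normalizer_iter_subgroup, HS.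
Qed.

Section Subnormal.

Variables A F H : G -> Prop.
Variable n : nat.
Hypotheses (A_normal : is_normal G A) (A_sub_H : subset G A H) (H_subgroup : is_subgroup G H).
Hypotheses (F_subgroup : is_subgroup G F) (F_class : forall x, lcs G F n x -> x = 1).
Hypothesis FA_full : forall g, setmul G F A g.

Let A_sub_normalizer_iter (k : nat) : subset G A (normalizer_iter H k).
Proof. intros a ha. apply subset_normalizer_iter, A_sub_H, ha. exact H_subgroup. Qed.

Lemma lcs_sub_normalizer_iter (k m : nat) :
  k + m = n -> subset G (lcs G F m) (normalizer_iter H k).
Proof.
  revert m. induction k as [|k IH]; intros m Hkm x hx.
  - simpl in Hkm. subst m. rewrite (F_class _ hx). apply subgroup1, H_subgroup.
  - assert (NkS := normalizer_iter_subgroup k H_subgroup).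
    enough (key : forall x', lcs G F m x' -> forall y, normalizer_iter H k y ->
                    normalizer_iter H k (conj G y x')).
    { intros y hy. split; apply key; auto.
      apply subgroupV; [apply lcs_subgroup, F_subgroup|exact hx]. }
    intros x' hx' y hy. destruct (FA_full y) as [r [a [hr [ha ->]]]].
    assert (hrN : normalizer_iter H k r).
    { replace r with (r · a · a⁻¹) by group_eq.
      apply subgroupM, subgroupV, A_sub_normalizer_iter; auto. }
    rewrite conjMg. apply subgroupM; [exact NkS| |apply A_sub_normalizer_iter, A_normal, ha].
    (* [x', r] lies one step further down the lower central series of F. *)
    replace (conj G r x') with (r · (comm G x' r)⁻¹) by group_eq.
    apply subgroupM, subgroupV; auto.
    apply (IH (S m)); [lia|]. apply subset_gen. exists x', r. auto.
Qed.

Lemma normalizer_iter_full (g : G) : normalizer_iter H n g.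
Proof.
  destruct (FA_full g) as [r [a [hr [ha ->]]]].
  apply subgroupM; [apply normalizer_iter_subgroup, H_subgroup| |].
  - apply (lcs_sub_normalizer_iter n 0); [lia|exact hr].
  - apply A_sub_normalizer_iter, ha.
Qed.

End Subnormal.

Lemma contranormal_sub_subnormal (C H : G -> Prop) (n : nat) :
  contranormal G C -> is_subgroup G H -> subset G C H ->
  (forall g, normalizer_iter H n g) -> forall g, H g.
Proof.
  intros [_ Ccl] HS CH. induction n as [|n IH]; [auto|].
  intros Nfull. apply IH. intros g. apply (Ccl g).
  - apply normal_of_normalizer_full, Nfull. apply normalizer_iter_subgroup, HS.
  - intros c hc. apply subset_normalizer_iter, CH, hc. exact HS.
Qed.

Lemma contranormal_mul_normal (A C : G -> Prop) :
  locally_nilpotent G -> is_normal G A -> finite_index G A -> contranormal G C ->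
  forall g, setmul G A C g.
Proof.
  intros LN AN [s Hs] CC.
  assert (ACS : is_subgroup G (setmul G A C)) by exact (setmul_normal_subgroup AN (proj1 CC)).
  destruct (LN s) as [n F_class].
  apply (contranormal_sub_subnormal n CC ACS).
  - apply subset_setmulr, (subgroup1 (proj1 AN)).
  - apply (normalizer_iter_full n AN (F := gen G (fun x => In x s))); auto using gen_subgroup.
    + apply subset_setmull, (subgroup1 (proj1 CC)).
    + intros g. destruct (Hs g I) as [r [hr ha]].
      exists r, (r⁻¹ · g). split; [apply subset_gen, hr|split; [exact ha|group_eq]].
Qed.

(** * Coset representatives in C *)

Lemma transversal_in (A C : G -> Prop) :
  is_normal G A -> finite_index G A -> (forall g, setmul G A C g) ->
  exists t, (forall c, In c t -> C c) /\ forall g, exists c, In c t /\ A (c⁻¹ · g).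
Proof.
  intros AN [s Hs] AC.
  destruct (list_choice C (fun r c => A (c⁻¹ · r)) s) as [t [tC t_reps]].
  { intros r _. destruct (AC r) as [a [c [ha [hc ->]]]]. exists c. split; [exact hc|].
    replace (c⁻¹ · (a · c)) with (conj G a c) by group_eq. apply AN, ha. }
  exists t. split; [exact tC|]. intros g.
  destruct (Hs g I) as [r [hr hrg]]. destruct (t_reps r hr) as [c [hc hcr]].
  exists c. split; [exact hc|].
  replace (c⁻¹ · g) with (c⁻¹ · r · (r⁻¹ · g)) by group_eq.
  apply subgroupM; auto. apply AN.
Qed.

Lemma mul_gen_transversal (A : G -> Prop) (t : list G) :
  is_normal G A -> (forall g, exists c, In c t /\ A (c⁻¹ · g)) ->
  forall g, setmul G A (gen G (fun x => In x t)) g.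
Proof.
  intros AN t_reps g. destruct (t_reps g) as [c [hc ha]].
  exists (conj G (c⁻¹ · g) c⁻¹), c.
  split; [apply AN, ha|split; [apply subset_gen, hc|group_eq]].
Qed.

Lemma finitely_many_cosets_meet (A C : G -> Prop) (t : list G) :
  is_subgroup G C -> (forall c, In c t -> C c) ->
  (forall g, exists c, In c t /\ A (c⁻¹ · g)) ->
  finitely_many_cosets G C (meet C A).
Proof.
  intros CS tC t_reps. exists t. intros x hx. destruct (t_reps x) as [c [hc ha]].
  exists c. split; [exact hc|split; [|exact ha]].
  apply (subgroupM CS); [apply (subgroupV CS), tC, hc|exact hx].
Qed.

Lemma finitely_many_cosets_sub (X Y N : G -> Prop) :
  subset G Y X -> finitely_many_cosets G X N -> finitely_many_cosets G Y N.
Proof. intros YX [s Hs]. exists s. intros y hy. apply Hs, YX, hy. Qed.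

(** * The decomposition C = B K and A = B[K, A] *)

Definition normalizes (Z X : G -> Prop) : Prop :=
  forall x g, X x -> Z g -> X (conj G x g).

Lemma normal_of_normalizes_setmul (Y Z X : G -> Prop) :
  is_subgroup G X -> normalizes Y X -> normalizes Z X ->
  (forall g, setmul G Y Z g) -> is_normal G X.
Proof.
  intros XS YX ZX YZ. split; [exact XS|]. intros x g hx.
  destruct (YZ g) as [y [z [hy [hz ->]]]].
  replace (conj G x (y · z)) with (conj G (conj G x y) z) by group_eq. auto.
Qed.

Lemma normalizes_setmul (Z X Y : G -> Prop) :
  normalizes Z X -> normalizes Z Y -> normalizes Z (setmul G X Y).
Proof.
  intros ZX ZY w g [x [y [hx [hy ->]]]] hg. rewrite conjMg.
  exists (conj G x g), (conj G y g). auto.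
Qed.

Lemma abelian_normalizes (A X : G -> Prop) :
  abelian G A -> subset G X A -> normalizes A X.
Proof. intros Aab XA x a hx ha. rewrite (abelian_conj _ _ Aab (XA x hx) ha). exact hx. Qed.

Lemma comm_subgroup_sub_normal (K A : G -> Prop) :
  is_normal G A -> subset G (comm_subgroup G K A) A.
Proof.
  intros AN. apply gen_subG; [apply AN|]. intros z [k [a [hk [ha ->]]]].
  replace (comm G k a) with (conj G a⁻¹ k · a) by group_eq.
  apply subgroupM; [apply AN|apply AN, subgroupV, ha; apply AN|exact ha].
Qed.

Lemma normalizes_comm_subgroup (K A : G -> Prop) :
  is_normal G A -> normalizes K (comm_subgroup G K A).
Proof.
  intros AN d k hd hk.
  replace (conj G d k) with (d · (comm G k d)⁻¹) by group_eq.
  apply subgroupM, subgroupV; [apply gen_subgroup|exact hd|apply gen_subgroup|].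
  apply subset_gen. exists k, d. split; [exact hk|split; [|reflexivity]].
  apply (comm_subgroup_sub_normal (K := K) AN), hd.
Qed.

Lemma setmul_normal_of_comm_subgroup (A E K : G -> Prop) :
  is_normal G E -> is_subgroup G K -> (forall g, setmul G A K g) ->
  subset G (comm_subgroup G K A) E -> is_normal G (setmul G E K).
Proof.
  intros EN KS AK KAE. assert (MS := setmul_normal_subgroup EN KS).
  split; [exact MS|]. intros x g [e [k [he [hk ->]]]]. rewrite conjMg.
  apply subgroupM; [exact MS|apply subset_setmull; [apply KS|apply EN, he]|].
  destruct (AK g) as [a [k' [ha [hk' ->]]]].
  replace (conj G k (a · k')) with (conj G k k' · conj G (comm G k a) k') by group_eq.
  apply subgroupM; [exact MS|apply subset_setmulr; [apply EN|apply subgroup_conj; auto]|].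
  apply subset_setmull; [apply KS|]. apply EN, KAE, subset_gen. exists k, a. auto.
Qed.

Section Decomposition.

Variables A C K : G -> Prop.
Hypotheses (A_normal : is_normal G A) (A_abelian : abelian G A).
Hypotheses (C_subgroup : is_subgroup G C) (K_subgroup : is_subgroup G K).
Hypotheses (K_sub_C : subset G K C) (AK_full : forall g, setmul G A K g).

Let A_subgroup : is_subgroup G A := proj1 A_normal.

Lemma meet_normal : is_normal G (meet C A).
Proof.
  apply (normal_of_normalizes_setmul (Y := A) (Z := C)).
  - apply meet_subgroup; [exact C_subgroup|apply A_normal].
  - apply abelian_normalizes; [exact A_abelian|]. intros x []; assumption.
  - intros x c [hx ha] hc. split; [apply subgroup_conj; auto|apply A_normal, ha].
  - intros g. destruct (AK_full g) as [a [k [ha [hk ->]]]]. exists a, k. auto.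
Qed.

Lemma subgroup_eq_meet_mul : seteq G C (setmul G (meet C A) K).
Proof.
  intros x. split.
  - intros hx. apply group_modr; auto.
  - intros [b [k [[hb _] [hk ->]]]]. apply subgroupM; auto.
Qed.

Lemma meet_mul_comm_subgroup_normal :
  is_normal G (setmul G (meet C A) (comm_subgroup G K A)).
Proof.
  assert (BN := meet_normal).
  apply (normal_of_normalizes_setmul (Y := A) (Z := K)); [| | |exact AK_full].
  - apply setmul_normal_subgroup, gen_subgroup. exact BN.
  - apply normalizes_setmul; [intros ? ? ? _; apply BN; assumption|].
    apply abelian_normalizes; [exact A_abelian|apply comm_subgroup_sub_normal, A_normal].
  - apply normalizes_setmul; [intros ? ? ? _; apply BN; assumption|].
    apply normalizes_comm_subgroup, A_normal.
Qed.

Lemma normal_eq_meet_mul_comm_subgroup :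
  contranormal G C -> seteq G A (setmul G (meet C A) (comm_subgroup G K A)).
Proof.
  intros C_contranormal.
  set (B := meet C A). set (E := setmul G B (comm_subgroup G K A)).
  assert (EN : is_normal G E) by exact meet_mul_comm_subgroup_normal.
  assert (BE : subset G B E) by (apply subset_setmull, gen_subgroup).
  assert (EA : subset G E A).
  { intros x [b [d [[_ hb] [hd ->]]]]. apply (subgroupM A_subgroup); [exact hb|].
    apply (comm_subgroup_sub_normal (K := K) A_normal), hd. }
  assert (EK_full : forall g, setmul G E K g).
  { intros g. apply (proj2 C_contranormal g).
    - apply (setmul_normal_of_comm_subgroup (A := A) EN); auto.
      apply subset_setmulr, (subgroup1 (proj1 meet_normal)).
    - intros c hc. destruct (proj1 (subgroup_eq_meet_mul c) hc) as [b [k [hb [hk ->]]]].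
      exists b, k. auto. }
  intros a. split; [|apply EA].
  intros ha. destruct (EK_full a) as [e [k [he [hk ->]]]].
  assert (hkA : A k).
  { replace k with (e⁻¹ · (e · k)) by group_eq.
    apply (subgroupM A_subgroup); [apply (subgroupV A_subgroup), EA, he|exact ha]. }
  apply (subgroupM (proj1 EN)); [exact he|apply BE; split; auto].
Qed.

End Decomposition.

End GroupTheory.

Theorem propositionB (G : Group) (A C : G -> Prop) :
  locally_nilpotent G ->
  is_normal G A -> abelian G A -> finite_index G A ->
  contranormal G C -> proper G C ->
  exists (B K : G -> Prop),
    is_normal G B /\ subset G B A /\
    is_subgroup G K /\ finitely_generated G K /\
    (forall g : G, setmul G A K g) /\
    seteq G C (setmul G B K) /\
    seteq G A (setmul G B (comm_subgroup G K A)) /\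
    (* "in particular": KB/B is a finite contranormal subgroup of G/B,
       expressed through the correspondence theorem on preimages in G *)
    finitely_many_cosets G (setmul G K B) B /\
    contranormal G (setmul G K B).
Proof.
  intros LN AN Aab FI CC _.
  destruct (transversal_in AN FI (contranormal_mul_normal LN AN FI CC)) as [t [tC t_reps]].
  set (K := gen G (fun x => In x t)).
  assert (KS : is_subgroup G K) by apply gen_subgroup.
  assert (KC : subset G K C) by (apply gen_subG; [exact (proj1 CC)|exact tC]).
  assert (AK := mul_gen_transversal t AN t_reps).
  assert (BN := meet_normal AN Aab (proj1 CC) KC AK).
  assert (C_eq := subgroup_eq_meet_mul (proj1 CC) KC AK).
  assert (C_eq_KB : seteq G C (setmul G K (meet G C A))).
  { intros x. rewrite (setmul_normalC K BN x). apply C_eq. }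
  exists (meet G C A), K.
  split; [exact BN|]. split; [intros x []; assumption|].
  split; [exact KS|]. split; [exists t; intros x; split; auto|].
  split; [exact AK|]. split; [exact C_eq|].
  split; [exact (normal_eq_meet_mul_comm_subgroup AN Aab (proj1 CC) KS KC AK CC)|]. split.
  - apply (finitely_many_cosets_sub (fun x => proj2 (C_eq_KB x))).
    exact (finitely_many_cosets_meet A t (proj1 CC) tC t_reps).
  - exact (contranormal_seteq C_eq_KB CC).
Qed.
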